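(* For every $n\geq1$ and all $k_1,\dots,k_n\geq0$ there are isomorphisms of $\Sigma$-spaces \[ \mathcal{P}^{(n)}\Delta[k_1,\dots,k_n]\;\cong\;\mathcal{P}\Delta[k_1]\times\dots\times\mathcal{P}\Delta[k_n]\;\cong\;N^{\mathrm{ex}}\mathrm{Ar}[k_1]\times\dots\times N^{\mathrm{ex}}\mathrm{Ar}[k_n]. \]
   Context: Let $\Delta$ be the simplex category and let $\Sigma$ be the category obtained from $\Delta\times\Delta$ by freely adjoining a terminal object $[-1]$. A $\Sigma$-space is a functor $\Sigma^{\mathrm{op}}\to\mathcal{S}$ to spaces (e.g. simplicial sets); equivalently, a bisimplicial space $X_{\bullet,\bullet}$ together with a space $X_{-1}$ and an augmentation map $X_{-1}\to X_{0,0}$ (induced by the unique map $([0],[0])\to[-1]$). Products of $\Sigma$-spaces are taken levelwise. Let $p\colon\Sigma\to\Delta$ be the ordinal sum functor, $[-1]\mapsto[0]$ and $([a],[b])\mapsto[a+1+b]$ (on morphisms: ordinal sum of maps, and the unique map to $[0]$ for maps to $[-1]$). Let $\mathcal{P}=p^*\colon\mathcal{S}^{\Delta^{\mathrm{op}}}\to\mathcal{S}^{\Sigma^{\mathrm{op}}}$ be precomposition with $p$. For $n\geq1$ let $p^{(n)}\colon\Sigma\to\Delta^{\times n}$ be $\sigma\mapsto(p(\sigma),\dots,p(\sigma))$ and $\mathcal{P}^{(n)}=(p^{(n)})^*\colon\mathcal{S}^{(\Delta^{\mathrm{op}})^{\times n}}\to\mathcal{S}^{\Sigma^{\mathrm{op}}}$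 precomposition with $p^{(n)}$. Here $\Delta[k]$ denotes the (discrete) simplicial space represented by $[k]$, and $\Delta[k_1,\dots,k_n]$ the (discrete) $n$-fold simplicial space represented by $([k_1],\dots,[k_n])$. For $k\geq0$, let $\mathrm{Ar}[k]=[k]^{[1]}$ be the arrow category of $[k]$, i.e. the poset of pairs $(i,j)$ with $0\le i\le j\le k$, with $(i,j)\le(i',j')$ iff $i\le i'$ and $j\le j'$. Call a morphism $(i,j)\to(i,j')$ horizontal and a morphism $(i,j)\to(i',j)$ vertical; the objects $(i,i)$ are the zero objects. The exact nerve $N^{\mathrm{ex}}\mathrm{Ar}[k]$ is the (discrete) $\Sigma$-space with $N^{\mathrm{ex}}_{-1}\mathrm{Ar}[k]$ the set of zero objects $(i,i)$, and $N^{\mathrm{ex}}_{a,b}\mathrm{Ar}[k]$ the set of exact functors $F\colon[a]\times[b]\to\mathrm{Ar}[k]$, i.e. functors sending each morphism $(i,j)\to(i,j+\ell)$ of $[a]\times[b]$ to a horizontal morphism and each morphism $(i,j)\to(i+m,j)$ to a vertical morphism (all commutative squares being allowed); the bisimplicial structure is given by precomposition with maps $[a']\times[b']\to[a]\times[b]$ induced by morphisms of $\Delta\times\Delta$, and the augmentation sends a zero object to the constant functor $[0]\times[0]\to\mathrm{Ar}[k]$ at it. *)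

(* Sigma-sets (discrete Sigma-spaces), the functors P, P^(n),
   representables and the exact nerve of Ar[k]. *)
From mathcomp Require Import all_boot.
Set Implicit Arguments. Unset Strict Implicit. Unset Printing Implicit Defensive.

Definition monob (m n : nat) (f : {ffun 'I_m.+1 -> 'I_n.+1}) : bool :=
  [forall i : 'I_m.+1, forall j : 'I_m.+1, (i <= j) ==> (f i <= f j)].

Definition DHom (m n : nat) := {f : {ffun 'I_m.+1 -> 'I_n.+1} | monob f}.

Lemma monob_const (m n : nat) (c : 'I_n.+1) : monob [ffun _ : 'I_m.+1 => c].
Proof. by apply/forallP => i; apply/forallP => j; rewrite !ffunE leqnn implybT. Qed.

Definition dconst (m n : nat) : DHom m n := exist (@monob m n) _ (monob_const m ord0).

(* composition g o f; the raw composite is always monotone, [insubd] just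
   packages it (the default is never used). *)
Definition dcomp (m n k : nat) (g : DHom n k) (f : DHom m n) : DHom m k :=
  insubd (dconst m k) [ffun i => sval g (sval f i)].

Definition osum (a' a b' b : nat) (f : DHom a' a) (g : DHom b' b)
  : DHom (a' + 1 + b') (a + 1 + b) :=
  insubd (dconst _ _)
    [ffun i : 'I_(a' + 1 + b').+1 =>
       if (i <= a')%N then inord (sval f (inord i))
       else inord (a + 1 + sval g (inord (i - a'.+1)))].

(* ---------- The category Sigma = (Delta x Delta) with a terminal [-1] ---------- *)
Inductive Sig : Type := Sneg | Spair (a b : nat).

Definition SHom (s t : Sig) : Type :=
  match s, t with
  | Sneg, Sneg => unit
  | Spair _ _, Sneg => unit
  | Sneg, Spair _ _ => Empty_set
  | Spair a' b', Spair a b => (DHom a' a * DHom b' b)%type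
  end.

Definition pobj (s : Sig) : nat :=
  match s with Sneg => 0 | Spair a b => a + 1 + b end.

Definition pmap (s t : Sig) : SHom s t -> DHom (pobj s) (pobj t) :=
  match s, t return SHom s t -> DHom (pobj s) (pobj t) with
  | Sneg, Sneg => fun _ => dconst 0 0
  | Spair a b, Sneg => fun _ => dconst (a + 1 + b) 0
  | Sneg, Spair _ _ => fun e => match e with end
  | Spair a' b', Spair a b => fun fg => osum fg.1 fg.2
  end.

Unset Implicit Arguments.
Record SigmaSet := {
  sobj : Sig -> Type;
  sact : forall s t : Sig, SHom s t -> sobj t -> sobj s }.
Set Implicit Arguments.
Arguments sact _ {s t} _ _.

Definition SigmaIso (X Y : SigmaSet) : Prop :=
  exists (phi : forall s, sobj X s -> sobj Y s)
         (psi : forall s, sobj Y s -> sobj X s),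
    [/\ forall s, cancel (phi s) (psi s),
        forall s, cancel (psi s) (phi s) &
        forall (s t : Sig) (f : SHom s t) (x : sobj X t),
          phi s (sact X f x) = sact Y f (phi t x)].

Definition prodS (n : nat) (X : 'I_n -> SigmaSet) : SigmaSet := {|
  sobj := fun s => forall i : 'I_n, sobj (X i) s;
  sact := fun s t f x => fun i => sact (X i) f (x i) |}.

(* P Delta[k] = p^* of the representable simplicial set Delta[k] *)
Definition PDelta (k : nat) : SigmaSet := {|
  sobj := fun s => DHom (pobj s) k;
  sact := fun s t f x => dcomp x (pmap f) |}.

Definition DnHom (n : nat) (m k : 'I_n -> nat) : Type :=
  forall i : 'I_n, DHom (m i) (k i).

(* P^(n) Delta[k_1,...,k_n] = (p^(n))^* of the representable n-fold
   simplicial set; p^(n) f = (p f, ..., p f) acting componentwise *)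
Definition PnDelta (n : nat) (k : 'I_n -> nat) : SigmaSet := {|
  sobj := fun s => DnHom (fun _ => pobj s) k;
  sact := fun s t f x => fun i => dcomp (x i) (pmap f) |}.

Definition ArObj (k : nat) := {p : 'I_k.+1 * 'I_k.+1 | (p.1 <= p.2)%N}.
Definition ZeroObj (k : nat) := {x : ArObj k | (sval x).1 == (sval x).2}.

(* exact functors [a] x [b] -> Ar[k]: functors of posets sending each
   morphism (i,j) -> (i,j') to a horizontal morphism and each morphism
   (i,j) -> (i',j) to a vertical morphism *)
Definition exactb (a b k : nat) (F : {ffun 'I_a.+1 * 'I_b.+1 -> ArObj k}) : bool :=
  [&& [forall x : 'I_a.+1 * 'I_b.+1, forall y : 'I_a.+1 * 'I_b.+1,
         ((x.1 <= y.1) && (x.2 <= y.2))%N ==>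
         (((sval (F x)).1 <= (sval (F y)).1) && ((sval (F x)).2 <= (sval (F y)).2))%N],
      [forall i : 'I_a.+1, forall j : 'I_b.+1, forall j' : 'I_b.+1,
         (j <= j')%N ==> ((sval (F (i, j))).1 == (sval (F (i, j'))).1)] &
      [forall i : 'I_a.+1, forall i' : 'I_a.+1, forall j : 'I_b.+1,
         (i <= i')%N ==> ((sval (F (i, j))).2 == (sval (F (i', j))).2)]].

Definition ExF (a b k : nat) := {F : {ffun 'I_a.+1 * 'I_b.+1 -> ArObj k} | exactb F}.

Definition ar0 (k : nat) : ArObj k := exist (fun p : 'I_k.+1 * 'I_k.+1 => (p.1 <= p.2)%N) (ord0, ord0) (leqnn 0).

Lemma exactb_const (a b k : nat) (z : ArObj k) : exactb [ffun _ : 'I_a.+1 * 'I_b.+1 => z].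
Proof.
apply/and3P; split.
- by apply/forallP => x; apply/forallP => y; rewrite !ffunE !leqnn implybT.
- by apply/forallP => i; apply/forallP => j; apply/forallP => j'; rewrite !ffunE eqxx implybT.
- by apply/forallP => i; apply/forallP => i'; apply/forallP => j; rewrite !ffunE eqxx implybT.
Qed.

(* constant functor (default value; also the augmentation) *)
Definition exconst (a b k : nat) (z : ArObj k) : ExF a b k :=
  exist (@exactb a b k) _ (exactb_const a b z).

Definition NexObj (k : nat) (s : Sig) : Type :=
  match s with Sneg => ZeroObj k | Spair a b => ExF a b k end.

(* precomposition; [insubd] only packages the (always exact) composite *)
Definition NexAct (k : nat) (s t : Sig) : SHom s t -> NexObj k t -> NexObj k s :=
  match s, t return SHom s t -> NexObj k t -> NexObj k s with
  | Sneg, Sneg => fun _ z => z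
  | Spair a b, Sneg => fun _ z => exconst a b (sval z)
  | Sneg, Spair _ _ => fun e => match e with end
  | Spair a' b', Spair a b => fun fg F =>
      insubd (exconst a' b' (ar0 k))
        [ffun x : 'I_a'.+1 * 'I_b'.+1 => sval F (sval fg.1 x.1, sval fg.2 x.2)]
  end.

Definition NexAr (k : nat) : SigmaSet := {| sobj := NexObj k; sact := @NexAct k |}.

(* An exact functor F : [a] x [b] -> Ar[k] has constant source along each
   horizontal line and constant target along each vertical one, so it is
   determined by the sources i_0 <= ... <= i_a of F(-,0) and the targets
   j_0 <= ... <= j_b of F(0,-), subject only to i_a <= j_0.  Concatenated,
   these are exactly a monotone map [a+1+b] -> [k], i.e. a simplex of
   P Delta[k] in degree ([a],[b]); precomposition with (f, g) becomes
   precomposition with the ordinal sum of f and g, and in degree [-1] a zero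
   object (i,i) is just the vertex i.  Products of isomorphisms are
   isomorphisms, which gives the second isomorphism factorwise. *)

From mathcomp Require Import all_boot zify.
From Stdlib Require Import FunctionalExtensionality ClassicalEpsilon.
Set Implicit Arguments. Unset Strict Implicit.

Lemma monobP m n (f : {ffun 'I_m.+1 -> 'I_n.+1}) :
  reflect {homo f : i j / i <= j} (monob f).
Proof.
apply: (iffP forallP) => [mono_f i j | mono_f i].
  by move: (mono_f i) => /forallP/(_ j)/implyP.
by apply/forallP => j; apply/implyP; apply: mono_f.
Qed.

Lemma dhom_mono m n (x : DHom m n) : {homo sval x : i j / i <= j}.
Proof. exact/monobP/(svalP x). Qed.

Lemma dcompE m n p (g : DHom n p) (f : DHom m n) : sval (dcomp g f) =1 sval g \o sval f.
Proof.
move=> i; rewrite /dcomp val_insubd.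
have /monobP-> : {homo [ffun i => sval g (sval f i)] : i j / i <= j}.
  by move=> u v le_uv; rewrite !ffunE; apply/dhom_mono/dhom_mono.
by rewrite ffunE.
Qed.

Section Concatenation.
Variables a b : nat.

Definition ordl (i : 'I_a.+1) : 'I_(a + 1 + b).+1 := inord i.
Definition ordr (j : 'I_b.+1) : 'I_(a + 1 + b).+1 := inord (a + 1 + j).

Lemma val_ordl i : ordl i = i :> nat.
Proof. by rewrite inordK //; have := ltn_ord i; lia. Qed.

Lemma val_ordr j : ordr j = a + 1 + j :> nat.
Proof. by rewrite inordK //; have := ltn_ord j; lia. Qed.

Definition ocat T (u : 'I_a.+1 -> T) (v : 'I_b.+1 -> T) (i : 'I_(a + 1 + b).+1) : T :=
  if i <= a then u (inord i) else v (inord (i - a.+1)).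

Lemma ocat_ordl T (u : 'I_a.+1 -> T) v i : ocat u v (ordl i) = u i.
Proof.
rewrite /ocat val_ordl (ltnSE (ltn_ord i)); congr u.
by apply: val_inj; rewrite /= inordK.
Qed.

Lemma ocat_ordr T u (v : 'I_b.+1 -> T) j : ocat u v (ordr j) = v j.
Proof.
rewrite /ocat val_ordr ifF; last lia.
have lt_j := ltn_ord j.
by congr v; apply: val_inj; rewrite /= inordK; lia.
Qed.

Lemma eq_ocat T (u u' : 'I_a.+1 -> T) (v v' : 'I_b.+1 -> T) :
  u =1 u' -> v =1 v' -> ocat u v =1 ocat u' v'.
Proof. by move=> eq_u eq_v i; rewrite /ocat eq_u eq_v. Qed.

Lemma ocat_split T (x : 'I_(a + 1 + b).+1 -> T) : ocat (x \o ordl) (x \o ordr) =1 x.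
Proof.
move=> i; rewrite /ocat /=; have lt_i := ltn_ord i.
by case: leqP => le_ia; congr x; apply: val_inj; rewrite /= !inordK; lia.
Qed.

Lemma ocat_mono n (u : 'I_a.+1 -> 'I_n.+1) (v : 'I_b.+1 -> 'I_n.+1) :
  {homo u : i j / i <= j} -> {homo v : i j / i <= j} -> u ord_max <= v ord0 ->
  {homo ocat u v : i j / i <= j}.
Proof.
move=> mono_u mono_v le_uv i j le_ij; rewrite /ocat.
have lt_i := ltn_ord i; have lt_j := ltn_ord j.
case: ifP => le_ia; case: ifP => le_ja.
- by apply: mono_u; rewrite !inordK; lia.
- apply: leq_trans (mono_u _ ord_max _) (leq_trans le_uv (mono_v _ _ _)) => //.
  by rewrite /= inordK; lia.
- lia.
- by apply: mono_v; rewrite !inordK; lia.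
Qed.

End Concatenation.

Arguments ordl {a b}.
Arguments ordr {a b}.

Lemma osumE a' a b' b (f : DHom a' a) (g : DHom b' b) :
  sval (osum f g) =1 ocat (ordl \o sval f) (ordr \o sval g).
Proof.
have mono_l : {homo @ordl a b : i j / i <= j} by move=> i j; rewrite !val_ordl.
have mono_r : {homo @ordr a b : i j / i <= j} by move=> i j; rewrite !val_ordr leq_add2l.
have /monobP mono_cat :
    {homo [ffun i => ocat (ordl \o sval f) (ordr \o sval g) i] : i j / i <= j}.
  move=> i j le_ij; rewrite !ffunE; apply: ocat_mono le_ij.
  - by move=> u v le_uv; apply/mono_l/dhom_mono.
  - by move=> u v le_uv; apply/mono_r/dhom_mono.
  - by rewrite /= val_ordl val_ordr; have := ltn_ord (sval f ord_max); lia.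
by move=> i; rewrite /osum val_insubd mono_cat ffunE.
Qed.

Lemma osum_ordl a' a b' b (f : DHom a' a) (g : DHom b' b) i :
  sval (osum f g) (ordl i) = ordl (sval f i).
Proof. by rewrite osumE ocat_ordl. Qed.

Lemma osum_ordr a' a b' b (f : DHom a' a) (g : DHom b' b) j :
  sval (osum f g) (ordr j) = ordr (sval g j).
Proof. by rewrite osumE ocat_ordr. Qed.

Section ExactNerve.
Variable k : nat.

Definition ar_src (u : ArObj k) : 'I_k.+1 := (sval u).1.
Definition ar_tgt (u : ArObj k) : 'I_k.+1 := (sval u).2.

Lemma ar_src_le_tgt u : ar_src u <= ar_tgt u.
Proof. exact: svalP u. Qed.

Definition ar_of_le (i j : 'I_k.+1) (le_ij : i <= j) : ArObj k :=
  exist (fun p : 'I_k.+1 * 'I_k.+1 => p.1 <= p.2) (i, j) le_ij.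

Lemma exactbP a b (F : {ffun 'I_a.+1 * 'I_b.+1 -> ArObj k}) :
  reflect
    [/\ forall x y : 'I_a.+1 * 'I_b.+1, x.1 <= y.1 -> x.2 <= y.2 ->
          ar_src (F x) <= ar_src (F y) /\ ar_tgt (F x) <= ar_tgt (F y),
        forall (i : 'I_a.+1) (j j' : 'I_b.+1), j <= j' ->
          ar_src (F (i, j)) = ar_src (F (i, j')) &
        forall (i i' : 'I_a.+1) (j : 'I_b.+1), i <= i' ->
          ar_tgt (F (i, j)) = ar_tgt (F (i', j))]
    (exactb F).
Proof.
apply: (iffP and3P) => [[/forallP mono /forallP row /forallP col] | [mono row col]].
  split.
  - move=> x y le1 le2; move/forallP/(_ y)/implyP: (mono x).
    by rewrite le1 le2 => /(_ isT)/andP.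
  - move=> i j j' le_j; apply/eqP.
    by move/forallP/(_ j)/forallP/(_ j')/implyP: (row i); apply.
  - move=> i i' j le_i; apply/eqP.
    by move/forallP/(_ i')/forallP/(_ j)/implyP: (col i); apply.
split; apply/forallP => x; apply/forallP => y.
- by apply/implyP => /andP[le1 le2]; apply/andP; apply: mono.
- by apply/forallP => j'; apply/implyP => le_j; apply/eqP/row.
- by apply/forallP => j; apply/implyP => le_i; apply/eqP/col.
Qed.

Section ExactFunctors.
Variables (a b : nat) (F : ExF a b k).

Definition ex_src (i : 'I_a.+1) : 'I_k.+1 := ar_src (sval F (i, ord0)).
Definition ex_tgt (j : 'I_b.+1) : 'I_k.+1 := ar_tgt (sval F (ord0, j)).

Lemma ar_src_exF i j : ar_src (sval F (i, j)) = ex_src i.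
Proof. by case/exactbP: (svalP F) => _ row _; rewrite /ex_src (row i ord0 j). Qed.

Lemma ar_tgt_exF i j : ar_tgt (sval F (i, j)) = ex_tgt j.
Proof. by case/exactbP: (svalP F) => _ _ col; rewrite /ex_tgt (col ord0 i j). Qed.

Lemma ex_src_mono : {homo ex_src : i i' / i <= i'}.
Proof.
move=> i i' le_i; case/exactbP: (svalP F) => [mono _ _].
by case: (mono (i, ord0) (i', ord0) le_i (leqnn 0)).
Qed.

Lemma ex_tgt_mono : {homo ex_tgt : j j' / j <= j'}.
Proof.
move=> j j' le_j; case/exactbP: (svalP F) => [mono _ _].
by case: (mono (ord0, j) (ord0, j') (leqnn 0) le_j).
Qed.

Lemma ex_src_le_tgt i j : ex_src i <= ex_tgt j.
Proof. by rewrite -(ar_src_exF i j) -(ar_tgt_exF i j) ar_src_le_tgt. Qed.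

Lemma dhom_of_exf_monob : monob [ffun i => ocat ex_src ex_tgt i].
Proof.
apply/monobP => i j le_ij; rewrite !ffunE.
exact: ocat_mono ex_src_mono ex_tgt_mono (ex_src_le_tgt _ _) _ _ le_ij.
Qed.

Definition dhom_of_exf : DHom (a + 1 + b) k := exist (@monob _ _) _ dhom_of_exf_monob.

End ExactFunctors.

Section Simplices.
Variables (a b : nat) (x : DHom (a + 1 + b) k).

Lemma ordl_le_ordr (i : 'I_a.+1) (j : 'I_b.+1) : sval x (ordl i) <= sval x (ordr j).
Proof. by apply: dhom_mono; rewrite val_ordl val_ordr; have := ltn_ord i; lia. Qed.

Definition exf_of_dhom_fun : {ffun 'I_a.+1 * 'I_b.+1 -> ArObj k} :=
  [ffun p => ar_of_le (ordl_le_ordr p.1 p.2)].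

Lemma exf_of_dhom_exact : exactb exf_of_dhom_fun.
Proof.
apply/exactbP; split=> [p q le1 le2 | i j j' _ | i i' j _]; rewrite !ffunE //.
by split; apply: dhom_mono; rewrite ?val_ordl ?val_ordr ?leq_add2l.
Qed.

Definition exf_of_dhom : ExF a b k := exist (@exactb _ _ _) _ exf_of_dhom_exact.

End Simplices.

Definition zero_of_vertex (v : 'I_k.+1) : ZeroObj k :=
  exist (fun u : ArObj k => ar_src u == ar_tgt u) (ar_of_le (leqnn v)) (eqxx v).

Definition dhom_of_vertex (v : 'I_k.+1) : DHom 0 k := exist (@monob 0 k) _ (monob_const 0 v).

Definition to_nex (s : Sig) : sobj (PDelta k) s -> sobj (NexAr k) s :=
  match s with
  | Sneg => fun x => zero_of_vertex (sval x ord0)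
  | Spair a b => @exf_of_dhom a b
  end.

Definition of_nex (s : Sig) : sobj (NexAr k) s -> sobj (PDelta k) s :=
  match s with
  | Sneg => fun z => dhom_of_vertex (ar_src (sval z))
  | Spair a b => @dhom_of_exf a b
  end.

Arguments to_nex : clear implicits.
Arguments of_nex : clear implicits.

Lemma to_nexK s : cancel (to_nex s) (of_nex s).
Proof.
case: s => [|a b] x; apply: val_inj; apply/ffunP => i; rewrite !ffunE.
  by rewrite (ord1 i).
have row : ex_src (exf_of_dhom x) =1 sval x \o ordl by move=> i'; rewrite /ex_src ffunE.
have col : ex_tgt (exf_of_dhom x) =1 sval x \o ordr by move=> j; rewrite /ex_tgt ffunE.
by rewrite (eq_ocat row col) ocat_split.
Qed.

Lemma of_nexK s : cancel (of_nex s) (to_nex s).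
Proof.
case: s => [|a b] [F exF]; apply: val_inj => /=.
  apply: val_inj; rewrite /= ffunE /ar_src.
  by move: exF; case: (sval F) => u v /= /eqP ->.
apply/ffunP => -[i j]; apply: val_inj.
rewrite /exf_of_dhom_fun ffunE /= !ffunE ocat_ordl ocat_ordr.
rewrite -(ar_src_exF (exist _ F exF) i j) -(ar_tgt_exF (exist _ F exF) i j).
rewrite /ar_src /ar_tgt /=.
by case: (sval (F (i, j))).
Qed.

Lemma to_nex_natural s t (f : SHom s t) (x : sobj (PDelta k) t) :
  to_nex s (sact (PDelta k) f x) = sact (NexAr k) f (to_nex t x).
Proof.
case: s f => [|a' b']; case: t x => [|a b] x f //=.
- by rewrite dcompE /= ffunE.
- by apply: val_inj; apply/ffunP => p; apply: val_inj; rewrite !ffunE /= !dcompE /= !ffunE.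
(* The raw precomposite is the graph of an exact functor, so [insubd] keeps it. *)
case: f => f g; set precomp := [ffun _ => _].
have -> : precomp = sval (exf_of_dhom (dcomp x (osum f g))).
  apply/ffunP => p; apply: val_inj; rewrite !ffunE /= !dcompE /=.
  by rewrite osum_ordl osum_ordr.
by rewrite valKd.
Qed.

Lemma PDelta_NexAr_iso : SigmaIso (PDelta k) (NexAr k).
Proof.
exists to_nex, of_nex.
by split; [exact: to_nexK | exact: of_nexK | exact: to_nex_natural].
Qed.

End ExactNerve.

Lemma SigmaIso_refl X : SigmaIso X X.
Proof. by exists (fun s x => x), (fun s x => x). Qed.

Lemma SigmaIso_prodS n (X Y : 'I_n -> SigmaSet) :
  (forall i, SigmaIso (X i) (Y i)) -> SigmaIso (prodS X) (prodS Y).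
Proof.
move=> isoXY.
have iso_data i : {phi : forall s, sobj (X i) s -> sobj (Y i) s &
                   {psi : forall s, sobj (Y i) s -> sobj (X i) s |
    [/\ forall s, cancel (phi s) (psi s), forall s, cancel (psi s) (phi s) &
        forall s t (f : SHom s t) x, phi s (sact (X i) f x) = sact (Y i) f (phi t x)]}}.
  case/constructive_indefinite_description: (isoXY i) => phi.
  by case/constructive_indefinite_description => psi iso; exists phi, psi.
exists (fun s x i => projT1 (iso_data i) s (x i)).
exists (fun s x i => sval (projT2 (iso_data i)) s (x i)).
split=> [s x | s x | s t f x]; apply: functional_extensionality_dep => i /=;
  case: (iso_data i) => phi [psi [phiK psiK phi_natural]] /=.
- exact: phiK.
- exact: psiK.
- exact: phi_natural.
Qed.

Theorem mainTheorem1 (n : nat) (k : 'I_n -> nat) : (1 <= n)%N ->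
  SigmaIso (PnDelta k) (prodS (fun i => PDelta (k i))) /\
  SigmaIso (prodS (fun i => PDelta (k i))) (prodS (fun i => NexAr (k i))).
Proof.
move=> _; split.
  (* [p^(n)] is the diagonal after [p], so this holds on the nose. *)
  exact: SigmaIso_refl.
by apply: SigmaIso_prodS => i; apply: PDelta_NexAr_iso.
Qed.
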